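(* Let $A$ be a real symmetric positive semidefinite $n\times n$ matrix, $P$ an orthogonal projection matrix, $T\in\{1,\dots,n\}$, and $u>\lambda_{\max}(A)$. Then $$\sum_{i=n-T+1}^n\frac{1}{u-\lambda_i(PAP)}\le\sum_{i=n-T+1}^n\frac{1}{u-\lambda_i(A)}.$$
   Context: Eigenvalues $\lambda_1\le\dots\le\lambda_n$ of a symmetric matrix are listed in increasing order. *)

From HB Require Import structures.
From mathcomp Require Import all_boot all_order all_algebra.
From mathcomp Require Import reals.
From Stdlib Require Import ClassicalEpsilon.
Set Implicit Arguments. Unset Strict Implicit. Unset Printing Implicit Defensive.
Import Order.TTheory GRing.Theory Num.Theory.
Local Open Scope ring_scope.

(* Such a sequence
   exists for symmetric real matrices (spectral theorem); otherwise the
   definition returns an unspecified sequence. *)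
Definition eigen_seq (R : realType) (n : nat) (A : 'M[R]_n) : seq R :=
  epsilon (inhabits [::])
    (fun s : seq R => sorted <=%R s /\
       char_poly A = \prod_(x <- s) ('X - x%:P)).

(* lambda A i = lambda_{i+1}(A) : the (i+1)-th smallest eigenvalue (0-based i). *)
Definition eigval (R : realType) (n : nat) (A : 'M[R]_n) (i : nat) : R :=
  nth 0 (eigen_seq A) i.

Definition lambda_max (R : realType) (n : nat) (A : 'M[R]_n) : R :=
  eigval A n.-1.

Definition symmetricmx (R : realType) (n : nat) (A : 'M[R]_n) : Prop :=
  A^T = A.

Definition psdmx (R : realType) (n : nat) (A : 'M[R]_n) : Prop :=
  symmetricmx A /\ forall v : 'cV[R]_n, 0 <= (v^T *m A *m v) 0 0.

Definition orth_projmx (R : realType) (n : nat) (P : 'M[R]_n) : Prop :=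
  P^T = P /\ P *m P = P.

(* For a positive semidefinite A and an orthogonal projection P we show
   lambda_i(PAP) <= lambda_i(A) for every i; the corollary then follows because
   x |-> 1/(u - x) is increasing below u.  The comparison of eigenvalues is a
   counting argument: for t >= 0, the number of eigenvalues of PAP exceeding t is
   the largest dimension of a subspace W on which <PAPx, x> > t |x|^2.  Such a
   W meets ker P trivially, and since |Px| <= |x| the subspace WP has the same
   dimension and satisfies <Ay, y> > t |y|^2, so A has at least as many
   eigenvalues above t.  Both matrices are diagonalised by unitary matrices
   over R[i]. *)
From HB Require Import structures.
From mathcomp Require Import all_boot all_order all_algebra.
From mathcomp Require Import reals.
From mathcomp Require Import zify complex.
From Stdlib Require Import ClassicalEpsilon.
Set Implicit Arguments. Unset Strict Implicit. Unset Printing Implicit Defensive.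
Import Order.TTheory GRing.Theory Num.Theory.
Local Open Scope ring_scope.
Local Open Scope sesquilinear_scope.

Lemma char_poly_conj (F : fieldType) n (U D : 'M[F]_n) : U \in unitmx ->
  char_poly (invmx U *m D *m U) = char_poly D.
Proof.
move=> Uu; rewrite /char_poly /char_poly_mx.
set V := map_mx polyC U; set Vi := map_mx polyC (invmx U).
have ViV : Vi *m V = 1%:M by rewrite /Vi /V -map_mxM mulVmx // map_mx1.
have -> : 'X%:M - map_mx polyC (invmx U *m D *m U)
          = Vi *m ('X%:M - map_mx polyC D) *m V.
  rewrite mulmxBr mulmxBl !map_mxM -/V -/Vi; congr (_ - _).
  by rewrite mul_mx_scalar -scalemxAl ViV scalemx1.
by rewrite !det_mulmx mulrAC -det_mulmx ViV det1 mul1r.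
Qed.

Lemma rowV_neq0 (V : nmodType) n (x : 'rV[V]_n) : x != 0 -> exists j, x 0 j != 0.
Proof.
move=> xn0; apply/existsP; apply: contraR xn0 => /existsPn x0.
by apply/eqP/rowP => j; rewrite mxE; apply/eqP; move: (x0 j); rewrite negbK.
Qed.

Section SortedCount.
Variables (disp : Order.disp_t) (T : orderType disp) (x0 : T).
Implicit Types (s : seq T) (t : T).

Lemma sorted_take_le_nth s i : sorted <=%O s -> (i < size s)%N ->
  all (fun x => x <= nth x0 s i)%O (take i.+1 s).
Proof.
move=> s_sorted lt_i_s; apply/(all_nthP x0) => k.
rewrite size_takel // ltnS => le_k_i; rewrite nth_take ?ltnS //.
by apply: (sorted_leq_nth le_trans lexx) => //; rewrite inE (leq_ltn_trans le_k_i).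
Qed.

Lemma sorted_drop_ge_nth s i : sorted <=%O s ->
  all (fun x => nth x0 s i <= x)%O (drop i s).
Proof.
move=> s_sorted; apply/(all_nthP x0) => k; rewrite size_drop => lt_k.
have lt_ik : (i + k < size s)%N by rewrite -ltn_subRL.
rewrite nth_drop; apply: (sorted_leq_nth le_trans lexx) => //; rewrite ?inE ?leq_addr //.
exact: leq_ltn_trans (leq_addr k i) lt_ik.
Qed.

Lemma sorted_count_gt_nth s i : sorted <=%O s -> (i < size s)%N ->
  (count (fun x => nth x0 s i < x)%O s <= size s - i.+1)%N.
Proof.
move=> s_sorted lt_i_s; rewrite -[X in count _ X](cat_take_drop i.+1 s) count_cat.
have /allP take_le := sorted_take_le_nth s_sorted lt_i_s.
rewrite (eq_in_count (a2 := pred0)) ?count_pred0 => [|x /take_le /=]; last first.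
  by rewrite ltNge => ->.
by rewrite add0n -size_drop count_size.
Qed.

Lemma sorted_count_gt_ge s i t : sorted <=%O s -> (t < nth x0 s i)%O ->
  (size s - i <= count (fun x => t < x)%O s)%N.
Proof.
move=> s_sorted lt_t; rewrite -[X in count _ X](cat_take_drop i s) count_cat -size_drop.
have /allP drop_ge := sorted_drop_ge_nth i s_sorted.
suff : all (fun x => t < x)%O (drop i s) by rewrite all_count => /eqP <-; rewrite leq_addl.
by apply/allP => x /drop_ge; apply: lt_le_trans.
Qed.

Lemma sorted_le_nth_of_count s1 s2 : sorted <=%O s1 -> sorted <=%O s2 ->
  size s1 = size s2 ->
  (forall t, t \in s2 -> count (fun x => t < x)%O s1 <= count (fun x => t < x)%O s2)%N ->
  forall i, (i < size s1)%N -> (nth x0 s1 i <= nth x0 s2 i)%O.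
Proof.
move=> sorted1 sorted2 size12 count12 i lt_i; rewrite leNgt; apply/negP => lt21.
have lt_i2 : (i < size s2)%N by rewrite -size12.
have := leq_trans (sorted_count_gt_ge sorted1 lt21) (count12 _ (mem_nth x0 lt_i2)).
move/leq_trans/(_ (sorted_count_gt_nth sorted2 lt_i2)).
lia.
Qed.

End SortedCount.

Section RayleighCount.
Variables (C : numClosedFieldType) (n : nat).
Implicit Types (x : 'rV[C]_n) (t : C).

Definition sqnorm x : C := (x *m x ^t*) 0 0.
Definition qform (M : 'M[C]_n) x : C := (x *m M *m x ^t*) 0 0.

Definition qform_gt (M : 'M[C]_n) t m (W : 'M[C]_(m, n)) :=
  forall x, (x <= W)%MS -> x != 0 -> t * sqnorm x < qform M x.

Lemma sqnormE x : sqnorm x = \sum_j x 0 j * (x 0 j)^*.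
Proof. by rewrite /sqnorm mxE; apply: eq_bigr => j _; rewrite !mxE. Qed.

Lemma sqnorm_ge0 x : 0 <= sqnorm x.
Proof. by rewrite sqnormE; apply: sumr_ge0 => j _; exact: mul_conjC_ge0. Qed.

Lemma sqnorm_proj (P : 'M[C]_n) x : P ^t* = P -> P *m P = P ->
  sqnorm (x *m P) <= sqnorm x.
Proof.
move=> P_herm P_idem; set Q := 1%:M - P.
have Q_herm : Q ^t* = Q by rewrite /Q linearB /= trmx1 map_mxB map_mx1 P_herm.
have Q_idem : Q *m Q = Q.
  by rewrite /Q mulmxBl mul1mx mulmxBr mulmx1 P_idem subrr subr0.
have -> : sqnorm x = sqnorm (x *m P) + sqnorm (x *m Q).
  rewrite /sqnorm; transitivity ((x *m P *m (x *m P) ^t* + x *m Q *m (x *m Q) ^t*) 0 0).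
    rewrite !trmx_mul !map_mxM P_herm Q_herm -!mulmxA.
    by rewrite (mulmxA P) (mulmxA Q) P_idem Q_idem -mulmxDr -mulmxDl subrKC mul1mx.
  by rewrite mxE.
by rewrite lerDl sqnorm_ge0.
Qed.

Lemma qform_proj (A P : 'M[C]_n) x : P ^t* = P ->
  qform A (x *m P) = qform (P *m A *m P) x.
Proof. by move=> P_herm; rewrite /qform trmx_mul map_mxM P_herm !mulmxA. Qed.

Section Diagonal.
Variables (U : 'M[C]_n) (d : 'rV[C]_n).
Hypothesis U_unitary : U \is unitarymx.
Hypothesis d_real : forall j, d 0 j \is Num.real.
Let M := invmx U *m diag_mx d *m U.

Definition diag_count_gt t := #|[pred j : 'I_n | t < d 0 j]|.

Let UtU : U ^t* *m U = 1%:M.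
Proof. by rewrite -invmx_unitary // mulVmx // unitarymx_unit. Qed.

Lemma qform_diag x :
  qform M x = \sum_j d 0 j * ((x *m U^t*) 0 j * ((x *m U^t*) 0 j)^*).
Proof.
rewrite /qform /M invmx_unitary //.
have -> : x *m (U ^t* *m diag_mx d *m U) *m x ^t* =
          (x *m U^t*) *m diag_mx d *m (x *m U ^t*) ^t*.
  by rewrite trmx_mul map_mxM trmxCK !mulmxA.
rewrite mxE; apply: eq_bigr => j _.
by rewrite mul_mx_diag !mxE mulrCA mulrA.
Qed.

Lemma sqnorm_unitary x : sqnorm x = sqnorm (x *m U^t*).
Proof.
by rewrite /sqnorm trmx_mul map_mxM trmxCK mulmxA -(mulmxA x) UtU mulmx1.
Qed.

Section Coordinates.
Variable S : {pred 'I_n}.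
Let E := rowsub (fun i : 'I_#|S| => enum_val i) U.

Lemma rank_rowsub_unitary : \rank E = #|S|.
Proof.
apply/eqP; rewrite -/(row_free E); apply/row_freeP; exists (E ^t*).
apply/matrixP => i k.
have := congr1 (fun N : 'M_n => N (enum_val i) (enum_val k)) (unitarymxP U_unitary).
rewrite /= !mxE (inj_eq enum_val_inj) => <-.
by apply: eq_bigr => j _; rewrite !mxE.
Qed.

Lemma rowsub_unitary_coord0 x j : (x <= E)%MS -> j \notin S ->
  (x *m U ^t*) 0 j = 0.
Proof.
move=> /submxP [y ->] jNS; rewrite -mulmxA mul_rowsub_mx (unitarymxP U_unitary).
rewrite mxE; apply: big1 => i _; rewrite !mxE.
have /negbTE -> : enum_val i != j by apply: contraNneq jNS => <-; exact: enum_valP.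
by rewrite mulr0.
Qed.

End Coordinates.

Lemma rank_le_diag_count_gt m (W : 'M[C]_(m, n)) t : t \is Num.real ->
  qform_gt M t W -> (\rank W <= diag_count_gt t)%N.
Proof.
move=> t_real W_gt; rewrite leqNgt; apply/negP => lt_count.
pose S : {pred 'I_n} := [pred j | ~~ (t < d 0 j)].
have count_S : (diag_count_gt t + #|S| = n)%N by rewrite /diag_count_gt cardC card_ord.
have := rank_rowsub_unitary S; set E := rowsub _ U => rank_E.
have : (W :&: E)%MS != 0.
  rewrite -mxrank_eq0 -lt0n.
  have := mxrank_sum_cap W E; have := rank_leq_col (W + E)%MS; rewrite rank_E; lia.
case/rowV0Pn => x xWE xn0.
have xE : (x <= E)%MS by apply: submx_trans xWE (capmxSr _ _).
have := W_gt x (submx_trans xWE (capmxSl _ _)) xn0.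
rewrite qform_diag sqnorm_unitary sqnormE mulr_sumr => /lt_geF/negbT/negP; apply.
apply: ler_sum => j _; case: (boolP (j \in S)) => jS.
  by rewrite ler_wpM2r ?mul_conjC_ge0 // real_leNgt.
by rewrite (rowsub_unitary_coord0 xE jS) mul0r !mulr0.
Qed.

Lemma exists_qform_gt_of_rank t : exists m (W : 'M[C]_(m, n)),
  \rank W = diag_count_gt t /\ qform_gt M t W.
Proof.
set S := [pred j : 'I_n | t < d 0 j].
exists #|S|, (rowsub (fun i : 'I_#|S| => enum_val i) U).
split=> [|x xE xn0]; first exact: rank_rowsub_unitary.
rewrite qform_diag sqnorm_unitary sqnormE; set y := x *m U ^t*.
have [j yj] : exists j, y 0 j != 0.
  apply: rowV_neq0; apply: contraNneq xn0 => y0.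
  by rewrite -[x]mulmx1 -UtU mulmxA -/y y0 mul0mx.
have jS : j \in S by apply: contraR yj => jS; rewrite (rowsub_unitary_coord0 xE jS).
rewrite -subr_gt0 mulr_sumr -sumrB (bigD1 j) //= -mulrBl.
apply: ltr_pwDl; first by rewrite mulr_gt0 ?subr_gt0 ?mul_conjC_gt0.
apply: sumr_ge0 => k _; rewrite -mulrBl; case: (boolP (k \in S)) => kS.
  by rewrite mulr_ge0 ?mul_conjC_ge0 // subr_ge0 ltW.
by rewrite (rowsub_unitary_coord0 xE kS) mul0r mulr0.
Qed.

End Diagonal.
End RayleighCount.

Section Projection.
Variables (C : numClosedFieldType) (n : nat) (A P : 'M[C]_n).
Hypotheses (P_herm : P ^t* = P) (P_idem : P *m P = P).

Lemma rank_mulmx_proj t m (W : 'M[C]_(m, n)) : 0 <= t ->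
  qform_gt (P *m A *m P) t W -> \rank (W *m P) = \rank W.
Proof.
move=> t_ge0 W_gt; apply/mxrank_injP/rowV0P => x xWK; apply/eqP; apply: contraT => xn0.
have xP0 : x *m P = 0 by apply/sub_kermxP; apply: submx_trans xWK (capmxSr _ _).
have := W_gt x (submx_trans xWK (capmxSl _ _)) xn0.
rewrite -qform_proj // xP0 /qform !mul0mx mxE => /(le_lt_trans (mulr_ge0 t_ge0 (sqnorm_ge0 x))).
by rewrite ltxx.
Qed.

Lemma qform_gt_proj t m (W : 'M[C]_(m, n)) : 0 <= t ->
  qform_gt (P *m A *m P) t W -> qform_gt A t (W *m P).
Proof.
move=> t_ge0 W_gt _ /submxP [z ->] xn0; rewrite mulmxA qform_proj //.
have zWn0 : z *m W != 0 by apply: contraNneq xn0; rewrite mulmxA => ->; rewrite mul0mx.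
apply: le_lt_trans (W_gt _ (submxMl _ _) zWn0).
by rewrite ler_wpM2l // sqnorm_proj.
Qed.

Lemma diag_count_gt_proj (UA UB : 'M[C]_n) (dA dB : 'rV[C]_n) t :
  UA \is unitarymx -> (forall j, dA 0 j \is Num.real) ->
  A = invmx UA *m diag_mx dA *m UA ->
  UB \is unitarymx -> P *m A *m P = invmx UB *m diag_mx dB *m UB ->
  0 <= t -> (diag_count_gt dB t <= diag_count_gt dA t)%N.
Proof.
move=> UA_unitary dA_real AE UB_unitary PAPE t_ge0.
have [m [W [<- W_gt]]] := exists_qform_gt_of_rank dB UB_unitary t.
rewrite -PAPE in W_gt; rewrite -(rank_mulmx_proj t_ge0 W_gt).
apply: (rank_le_diag_count_gt UA_unitary dA_real (ger0_real t_ge0)).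
by rewrite -AE; apply: qform_gt_proj.
Qed.

End Projection.

Section RealSymmetric.
Variable R : realType.
Notation rc := (real_complex R).

Lemma eigen_seqE n (M : 'M[R]_n) s : sorted <=%R s ->
  char_poly M = \prod_(x <- s) ('X - x%:P) -> eigen_seq M = s.
Proof.
move=> s_sorted cpE.
have [e_sorted cp_eE] := epsilon_spec (inhabits [::])
  (fun s : seq R => sorted <=%R s /\ char_poly M = \prod_(x <- s) ('X - x%:P))
  (ex_intro _ s (conj s_sorted cpE)).
apply: (sorted_eq le_trans le_anti e_sorted s_sorted).
by apply: prod_XsubC_eq; rewrite -cp_eE.
Qed.

Definition re_spectrum n (d : 'rV[R[i]]_n) : seq R :=
  sort <=%R [seq complex.Re (d 0 j) | j <- enum 'I_n].

Lemma re_spectrum_sorted n (d : 'rV[R[i]]_n) : sorted <=%R (re_spectrum d).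
Proof. exact/sort_sorted/le_total. Qed.

Lemma size_re_spectrum n (d : 'rV[R[i]]_n) : size (re_spectrum d) = n.
Proof. by rewrite size_sort size_map size_enum_ord. Qed.

Lemma count_re_spectrum n (d : 'rV[R[i]]_n) (t : R) :
  (forall j, d 0 j \is Num.real) ->
  count (fun x => t < x) (re_spectrum d) = diag_count_gt d (rc t).
Proof.
move=> d_real; rewrite count_sort count_map /diag_count_gt cardE /enum_mem.
rewrite size_filter count_filter; apply: eq_count => j /=.
by rewrite andbT -ltcR (RRe_real (d_real j)).
Qed.

Lemma symmetric_diagonalization n (M : 'M[R]_n) : M^T = M ->
  exists U (d : 'rV[R[i]]_n), [/\ U \is unitarymx, forall j, d 0 j \is Num.real,
    M ^ rc = invmx U *m diag_mx d *m U &
    char_poly M = \prod_(x <- re_spectrum d) ('X - x%:P)].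
Proof.
move=> M_sym; have M_herm : M ^ rc \is hermsymmx.
  apply/is_hermitianmxP; rewrite expr0 scale1r; apply/matrixP => i j.
  have rc_conj (x : R) : (rc x)^* = rc x by exact: conjc_real.
  by rewrite !mxE rc_conj -{1}M_sym mxE.
exists (spectralmx (map_mx rc M)), (spectral_diag (map_mx rc M)).
have d_real : forall j, spectral_diag (map_mx rc M) 0 j \is Num.real.
  by move=> j; have /mxOverP := hermitian_spectral_diag_real M_herm; apply.
have /orthomx_spectralP ME := hermitian_normalmx M_herm.
split=> //; first exact: spectral_unitarymx.
apply: (map_poly_inj rc); rewrite map_char_poly {1}ME char_poly_conj ?spectral_unit //.
rewrite char_poly_trig ?diag_mx_is_trig // map_prod_XsubC.
rewrite (perm_big _ (permEl (perm_sort _ _))) /= big_map big_enum /=.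
by apply: eq_bigr => j _; rewrite mxE eqxx mulr1n RRe_real.
Qed.

Lemma eigen_seq_symmetric n (M : 'M[R]_n) : M^T = M ->
  sorted <=%R (eigen_seq M) /\ size (eigen_seq M) = n.
Proof.
move=> /symmetric_diagonalization [U [d [_ _ _ /(eigen_seqE (re_spectrum_sorted d)) ->]]].
by rewrite re_spectrum_sorted size_re_spectrum.
Qed.

Lemma psdmx_eigen_seq_ge0 n (A : 'M[R]_n) x : psdmx A -> x \in eigen_seq A -> 0 <= x.
Proof.
case=> A_sym A_psd; have [U [d [_ _ _ cpA]]] := symmetric_diagonalization A_sym.
rewrite (eigen_seqE (re_spectrum_sorted d) cpA) => x_eig.
have /eigenvalueP [v vA vn0] : eigenvalue A x.
  by rewrite eigenvalue_root_char cpA root_prod_XsubC.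
have [j vj] := rowV_neq0 vn0.
have vv_gt0 : 0 < (v *m v^T) 0 0.
  rewrite mxE (bigD1 j) //= mxE -expr2; apply: ltr_pwDl.
    by rewrite lt0r sqr_ge0 andbT sqrf_eq0.
  by apply: sumr_ge0 => k _; rewrite mxE -expr2 sqr_ge0.
by have := A_psd v^T; rewrite trmxK vA -scalemxAl mxE pmulr_lge0.
Qed.

Lemma eigval_proj_le n (A P : 'M[R]_n) i :
  psdmx A -> orth_projmx P -> (i < n)%N -> eigval (P *m A *m P) i <= eigval A i.
Proof.
move=> A_psd [P_sym P_idem] lt_i_n; have A_sym := A_psd.1.
have B_sym : (P *m A *m P)^T = P *m A *m P by rewrite !trmx_mul P_sym A_sym mulmxA.
have [UA [dA [UA_unitary dA_real AE cpA]]] := symmetric_diagonalization A_sym.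
have [UB [dB [UB_unitary dB_real BE cpB]]] := symmetric_diagonalization B_sym.
have eigA := eigen_seqE (re_spectrum_sorted dA) cpA.
rewrite /eigval eigA (eigen_seqE (re_spectrum_sorted dB) cpB).
apply: (@sorted_le_nth_of_count _ R 0 _ _ (re_spectrum_sorted dB) (re_spectrum_sorted dA)).
- by rewrite !size_re_spectrum.
- move=> t t_eig; rewrite !count_re_spectrum //.
  have t_ge0 : 0 <= t by apply: psdmx_eigen_seq_ge0 A_psd _; rewrite eigA.
  have Pc_herm : map_mx rc P ^t* = map_mx rc P.
    by apply/matrixP => k l; rewrite !mxE -{1}P_sym mxE; exact: conjc_real.
  have Pc_idem : map_mx rc P *m map_mx rc P = map_mx rc P by rewrite -map_mxM P_idem.
  have PAPE : map_mx rc P *m map_mx rc A *m map_mx rc P = invmx UB *m diag_mx dB *m UB.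
    by rewrite -!map_mxM; exact: BE.
  by apply: (diag_count_gt_proj Pc_herm Pc_idem UA_unitary dA_real AE UB_unitary PAPE);
    rewrite ler0c.
- by rewrite size_re_spectrum.
Qed.

Lemma eigval_le_lambda_max n (A : 'M[R]_n) i : A^T = A ->
  (i < n)%N -> eigval A i <= lambda_max A.
Proof.
move=> /eigen_seq_symmetric [e_sorted e_size] lt_i_n.
apply: (sorted_leq_nth le_trans lexx); rewrite ?inE /= ?e_size //; lia.
Qed.

End RealSymmetric.

Theorem corollary3p7 (R : realType) (n : nat) (A P : 'M[R]_n) (T : nat) (u : R) :
  psdmx A -> orth_projmx P -> (1 <= T <= n)%N -> lambda_max A < u ->
  \sum_(n - T <= i < n) (u - eigval (P *m A *m P) i)^-1
    <= \sum_(n - T <= i < n) (u - eigval A i)^-1.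
Proof.
(* The inequality holds termwise for every index, so the range of T is irrelevant. *)
move=> A_psd P_proj _ lt_u; apply: ler_sum_nat => i /andP [_ lt_i_n].
have A_lt_u := le_lt_trans (eigval_le_lambda_max A_psd.1 lt_i_n) lt_u.
have B_le_A := eigval_proj_le A_psd P_proj lt_i_n.
have B_lt_u := le_lt_trans B_le_A A_lt_u.
by rewrite lef_pV2 ?posrE ?subr_gt0 // lerD2l lerN2.
Qed.
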